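(* Let $G$ be a finite, connected, simple graph with shortest-path metric $d$. Then $G$ is meshed if and only if for every metric triangle $vxy$ of $G$ with $d(x,y)=2$, we have $d(v,x)=d(v,y)=2$ and there exists a vertex $z$ adjacent to both $x$ and $y$ such that $d(v,z)=2$.
   Context: All graphs are finite, connected, undirected, without loops or multiple edges; $d$ denotes the shortest-path distance. The interval between vertices $u,w$ is $I(u,w)=\{x: d(u,x)+d(x,w)=d(u,w)\}$. Three vertices $x,y,z$ form a metric triangle $xyz$ if $I(x,y)\cap I(x,z)=\{x\}$, $I(x,y)\cap I(y,z)=\{y\}$ and $I(x,z)\cap I(y,z)=\{z\}$. A graph $G$ is meshed if for any three vertices $v,x,y$ with $d(x,y)=2$ there exists a common neighbor $z$ of $x$ and $y$ such that $2d(v,z)\le d(v,x)+d(v,y)$. *)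

(* A finite simple graph is a finType T with a symmetric,
   irreflexive adjacency relation e : rel T. *)
From mathcomp Require Import all_boot.
Set Implicit Arguments. Unset Strict Implicit. Unset Printing Implicit Defensive.

Section Graph.
Variables (T : finType) (e : rel T).

Definition walkn (n : nat) (x y : T) : bool :=
  [exists p : n.-tuple T, path e x p && (last x p == y)].

(* In a connected graph on #|T| vertices such an n
   always exists, so this is the usual graph distance. *)
Definition gdist (x y : T) : nat :=
  find (fun n => walkn n x y) (iota 0 #|T|).

Definition gconnected : Prop := forall x y : T, connect e x y.

Definition interval (u w : T) : {set T} :=
  [set x | gdist u x + gdist x w == gdist u w].

Definition metric_triangle (x y z : T) : Prop :=
  [/\ interval x y :&: interval x z = [set x],
      interval x y :&: interval y z = [set y] &
      interval x z :&: interval y z = [set z]].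

Definition meshed : Prop :=
  forall v x y : T, gdist x y = 2 ->
    exists z : T, [/\ e x z, e z y & 2 * gdist v z <= gdist v x + gdist v y].

End Graph.

From mathcomp Require Import all_boot zify.
Set Implicit Arguments. Unset Strict Implicit. Unset Printing Implicit Defensive.

(* If G is meshed and vxy is a metric triangle with d(x,y) = 2, the mesh
   witness z lies in I(x,y) but in neither I(v,x) nor I(v,y); with the mesh
   inequality this forces d(v,x) = d(v,y) = d(v,z) = k.  Then k = 0
   contradicts x <> y, k = 1 puts v in I(x,y) :&: I(v,x), and k >= 3 would
   give v a neighbour in I(v,x) :&: I(v,y) (meshed_descent).
   Conversely, given v and x, y at distance 2, either a common neighbour of x
   and y closer to v than x or y is a mesh witness, or a vertex v' of
   I(v,x) :&: I(v,y) farthest from v spans a metric triangle v'xy; a common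
   neighbour of x and y at distance 2 from v' is then a mesh witness for v. *)

Section Meshed.
Variables (T : finType) (e : rel T).
Hypotheses (e_sym : symmetric e) (e_irr : irreflexive e) (e_conn : gconnected e).

Local Notation d := (gdist e).

Lemma walkn0 x y : walkn e 0 x y = (x == y).
Proof.
apply/existsP/idP => [[p /andP[_ /eqP <-]]|/eqP <-]; first by rewrite (tuple0 p).
by exists [tuple]; rewrite /= eqxx.
Qed.

Lemma walknS n x y : walkn e n.+1 x y = [exists u, e x u && walkn e n u y].
Proof.
apply/existsP/existsP => [[[[|u p] //= size_p]]|[u /andP[exu /existsP[p walk_p]]]].
  case/andP=> /andP[exu path_p] last_p; exists u; rewrite exu /=.
  by apply/existsP; exists (Tuple (size_p : size p == n)); rewrite /= path_p.
by exists [tuple of u :: p]; rewrite /= exu.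
Qed.

Lemma walkn1 x y : walkn e 1 x y = e x y.
Proof.
rewrite walknS; apply/existsP/idP => [[u /andP[exu]]|exy].
  by rewrite walkn0 => /eqP <-.
by exists y; rewrite exy walkn0 eqxx.
Qed.

Lemma walkn_cat m n x y z :
  walkn e m x y -> walkn e n y z -> walkn e (m + n) x z.
Proof.
elim: m x => [|m IHm] x; first by rewrite walkn0 => /eqP ->.
rewrite walknS addSn walknS => /existsP[u /andP[exu walk_uy]] walk_yz.
by apply/existsP; exists u; rewrite exu (IHm _ walk_uy walk_yz).
Qed.

Lemma walkn_sym n x y : walkn e n x y -> walkn e n y x.
Proof.
elim: n x y => [|n IHn] x y; first by rewrite !walkn0 eq_sym.
rewrite walknS -addn1 => /existsP[u /andP[exu /IHn walk_yu]].
by apply: walkn_cat walk_yu _; rewrite walkn1 e_sym.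
Qed.

Lemma has_walkn x y : has (fun n => walkn e n x y) (iota 0 #|T|).
Proof.
have /connectP[p path_p ->] := e_conn x y.
case: (shortenP path_p) => q path_q uniq_q _.
apply/hasP; exists (size q); rewrite ?mem_iota /=.
  by have := max_card (mem (x :: q)); rewrite (card_uniqP uniq_q).
by apply/existsP; exists (in_tuple q); rewrite /= path_q eqxx.
Qed.

Lemma gdist_lt x y : d x y < #|T|.
Proof. by have := has_walkn x y; rewrite has_find size_iota. Qed.

Lemma gdist_walkn x y : walkn e (d x y) x y.
Proof. by have := nth_find 0 (has_walkn x y); rewrite nth_iota ?gdist_lt. Qed.

Lemma gdist_min n x y : walkn e n x y -> d x y <= n.
Proof.
move=> walk_n; case: (ltnP n #|T|) => [n_lt|]; last exact: leq_trans (ltnW (gdist_lt x y)).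
rewrite leqNgt; apply/negP => /(before_find 0).
by rewrite nth_iota // walk_n.
Qed.

Lemma gdistxx x : d x x = 0.
Proof. by apply/eqP; rewrite -leqn0 gdist_min ?walkn0. Qed.

Lemma gdist_eq0 x y : d x y = 0 -> x = y.
Proof. by have := gdist_walkn x y => + d0; rewrite d0 walkn0 => /eqP. Qed.

Lemma gdistC x y : d x y = d y x.
Proof. by apply/eqP; rewrite eqn_leq !gdist_min // walkn_sym // gdist_walkn. Qed.

Lemma gdist_triangle x y z : d x z <= d x y + d y z.
Proof. by apply/gdist_min/walkn_cat; apply: gdist_walkn. Qed.

Lemma gdist_edge x y : e x y -> d x y = 1.
Proof.
move=> exy; apply/eqP; rewrite eqn_leq gdist_min ?walkn1 // lt0n.
by apply/eqP => /gdist_eq0 x_y; rewrite x_y e_irr in exy.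
Qed.

Lemma gdist1_edge x y : d x y = 1 -> e x y.
Proof. by have := gdist_walkn x y => + d1; rewrite d1 walkn1. Qed.

Lemma gdist_succ n x y : d x y = n.+1 -> exists2 u, e x u & d u y = n.
Proof.
move=> dxy; have := gdist_walkn x y; rewrite dxy walknS.
case/existsP=> u /andP[exu walk_uy]; exists u => //.
apply/eqP; rewrite eqn_leq gdist_min //=.
by have := gdist_triangle x u y; rewrite dxy (gdist_edge exu).
Qed.

Lemma interval_sym u w : interval e u w = interval e w u.
Proof. by apply/setP => x; rewrite !inE addnC (gdistC u x) (gdistC x w) (gdistC u w). Qed.

Lemma interval_sub x w p :
  p \in interval e x w -> interval e x p \subset interval e x w.
Proof.
rewrite inE => /eqP p_xw; apply/subsetP => u; rewrite !inE => /eqP u_xp.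
have := gdist_triangle x u w; have := gdist_triangle u p w; lia.
Qed.

Lemma interval_edge x p : p != x -> exists2 u, e x u & u \in interval e x p.
Proof.
move=> p_neq_x; have [n dxp] : exists n, d x p = n.+1.
  case dxp: (d x p) => [|n]; last by exists n.
  by move/gdist_eq0: dxp p_neq_x => ->; rewrite eqxx.
have [u exu dup] := gdist_succ dxp; exists u => //.
by rewrite inE (gdist_edge exu) dup dxp.
Qed.

Lemma setI_set1_mem (A B : {set T}) a p :
  A :&: B = [set a] -> p \in A -> p \in B -> p = a.
Proof. by move=> AB_a pA pB; apply/set1P; rewrite -AB_a inE pA pB. Qed.

Lemma edge_notin_interval v x u :
  e u x -> u \notin interval e v x -> d v x <= d v u.
Proof.
move=> eux; rewrite inE (gdist_edge eux).
by have := gdist_triangle v u x; rewrite (gdist_edge eux); lia.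
Qed.

Lemma closer_neighbor_mesh_bound v x y z :
  e z y -> d v z < d v x -> 2 * d v z <= d v x + d v y.
Proof.
by move=> ezy; have := gdist_triangle v y z; rewrite (gdistC y z) (gdist_edge ezy); lia.
Qed.

Definition metric_triangle_condition : Prop :=
  forall v x y, metric_triangle e v x y -> d x y = 2 ->
    [/\ d v x = 2, d v y = 2 & exists z, [/\ e x z, e z y & d v z = 2]].

Section MeshedDescent.
Hypothesis meshed_e : meshed e.

(* Take p closest to x among the neighbours of v on geodesics to y: if p were
   not closer to x than v, the mesh condition for v and a vertex two steps
   further towards y would give a neighbour of v even closer to x. *)
Lemma meshed_descent x n v y :
  d v y = n.+1 -> d x y < d x v -> exists p, [/\ e v p, d p y = n & d x p < d x v].
Proof.
elim: n v => [|n IHn] v dvy dxy_lt.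
  by exists y; rewrite gdistxx (gdist1_edge dvy).
pose P p := e v p && (d p y == n.+1).
have [p0 evp0 dp0y] := gdist_succ dvy.
have P_p0 : P p0 by rewrite /P evp0 dp0y eqxx.
case: (arg_minnP (d x) P_p0) => p /andP[evp /eqP dpy] p_min.
exists p; split => //; rewrite ltnNge; apply/negP => dxv_le.
have [q [epq dqy dxq]] := IHn p dpy (leq_trans dxy_lt dxv_le).
have dvq : d v q = 2.
  have := gdist_triangle v p q; have := gdist_triangle v q y.
  by rewrite (gdist_edge evp) (gdist_edge epq); lia.
have [z [evz ezq dxz]] := @meshed_e x v q dvq.
have P_z : P z.
  rewrite /P evz; have := gdist_triangle z q y; have := gdist_triangle v z y.
  by rewrite (gdist_edge evz) (gdist_edge ezq); lia.
by have := p_min z P_z; lia.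
Qed.

Lemma meshed_metric_triangle_condition : metric_triangle_condition.
Proof.
move=> v x y [vxy_v vxy_x vxy_y] dxy.
have [z [exz ezy mesh_z]] := @meshed_e v x y dxy.
have z_xy : z \in interval e x y by rewrite inE (gdist_edge exz) (gdist_edge ezy) dxy.
have dvx_le : d v x <= d v z.
  apply: edge_notin_interval; first by rewrite e_sym.
  by apply/negP => z_vx; move: exz; rewrite (setI_set1_mem vxy_x z_vx z_xy) e_irr.
have dvy_le : d v y <= d v z.
  apply: (edge_notin_interval ezy).
  by apply/negP => z_vy; move: ezy; rewrite (setI_set1_mem vxy_y z_vy z_xy) e_irr.
have dvx_0 : d v x != 0.
  by apply/eqP => /gdist_eq0 v_x; move: dvx_le dvy_le mesh_z; rewrite v_x gdistxx dxy; lia.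
have dvx_1 : d v x != 1.
  apply/eqP => dvx; have v_vx : v \in interval e v x by rewrite inE gdistxx.
  have v_xy : v \in interval e x y by rewrite inE gdistC dxy; lia.
  by move: dvx; have -> := setI_set1_mem vxy_x v_vx v_xy; rewrite gdistxx.
have [dvy dvz] : d v y = d v x /\ d v z = d v x by lia.
case: (d v x =P 2) => [dvx | dvx_neq2].
  by split=> //; [rewrite dvy | exists z; split=> //; rewrite dvz].
have [k dvy_k] : exists k, d v y = k.+1 by exists (d v y).-1; lia.
have [|p [evp dpy dxp]] := @meshed_descent x k v y dvy_k; first by rewrite dxy gdistC; lia.
suff p_v : p = v by rewrite p_v e_irr in evp.
have := gdist_triangle v p x; rewrite (gdist_edge evp) => dvx_step.
rewrite (gdistC x p) (gdistC x v) in dxp.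
apply: (setI_set1_mem vxy_v); rewrite inE (gdist_edge evp) ?dpy; lia.
Qed.

End MeshedDescent.

Lemma triangle_apex_of_farthest v x y v' :
  v' \in interval e v x -> v' \in interval e v y ->
  (forall p, p \in interval e v x -> p \in interval e v y -> d v p <= d v v') ->
  interval e v' x :&: interval e v' y = [set v'].
Proof.
move=> v'_vx v'_vy v'_max; apply/setP => p; rewrite in_setI in_set1.
apply/andP/eqP => [[p_v'x p_v'y] | ->]; last by rewrite !inE gdistxx !eqxx.
move: v'_vx v'_vy p_v'x p_v'y v'_max; rewrite !inE => /eqP v'_vx /eqP v'_vy /eqP p_x /eqP p_y.
have := gdist_triangle v p x; have := gdist_triangle v p y; have := gdist_triangle v v' p.
move=> tri_v'p tri_py tri_px /(_ p); rewrite !inE.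
have [-> ->] : d v p + d p x = d v x /\ d v p + d p y = d v y by lia.
by rewrite !eqxx => /(_ isT isT) dvp; apply/esym/gdist_eq0; lia.
Qed.

Lemma triangle_side_of_far_neighbors v v' x y :
  d x y = 2 -> (forall z, e x z -> e z y -> d v x <= d v z) ->
  v' \in interval e v x -> interval e v' x :&: interval e x y = [set x].
Proof.
move=> dxy far v'_vx; apply/setP => p; rewrite in_setI in_set1.
apply/andP/eqP => [[p_v'x p_xy] | ->]; last by rewrite !inE !gdistxx addn0 !eqxx.
case: (eqVneq p x) => // /interval_edge[u exu u_xp].
have v'_xv : v' \in interval e x v by rewrite interval_sym.
have p_xv : p \in interval e x v by apply: (subsetP (interval_sub v'_xv)); rewrite interval_sym.
have /(subsetP (interval_sub p_xy)) := u_xp; rewrite inE (gdist_edge exu) dxy => /eqP duy.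
have /(subsetP (interval_sub p_xv)) := u_xp; rewrite inE (gdist_edge exu) => /eqP duv.
have euy : e u y by apply: gdist1_edge; lia.
by have := far u exu euy; rewrite (gdistC v u) (gdistC v x); lia.
Qed.

Lemma metric_triangle_condition_meshed : metric_triangle_condition -> meshed e.
Proof.
move=> triangle_cond v x y dxy.
case: (boolP [exists z, [&& e x z, e z y & (d v z < d v x) || (d v z < d v y)]]).
  case/existsP=> z /and3P[exz ezy /orP[closer | closer]]; exists z; split=> //.
    exact: closer_neighbor_mesh_bound ezy closer.
  by rewrite addnC; apply: closer_neighbor_mesh_bound closer; rewrite e_sym.
move/existsPn => far.
have far_x z : e x z -> e z y -> d v x <= d v z.
  by move=> exz ezy; move: (far z); rewrite exz ezy negb_or -leqNgt => /andP[].
have far_y z : e y z -> e z x -> d v y <= d v z.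
  move=> eyz ezx; move: (far z).
  by rewrite (e_sym x) ezx (e_sym z) eyz negb_or -!leqNgt => /andP[].
pose S := [pred p | (p \in interval e v x) && (p \in interval e v y)].
have S_v : S v by rewrite /S /= !inE gdistxx !eqxx.
case: (arg_maxnP (d v) S_v) => v' /andP[v'_vx v'_vy] v'_max.
have v'xy_triangle : metric_triangle e v' x y.
  split.
  - apply: triangle_apex_of_farthest v'_vx v'_vy _ => p p_x p_y.
    by apply: v'_max; rewrite /S /= p_x.
  - exact: triangle_side_of_far_neighbors dxy far_x v'_vx.
  - by rewrite (interval_sym x y); apply: triangle_side_of_far_neighbors far_y v'_vy; rewrite gdistC.
have [dv'x dv'y [z [exz ezy dv'z]]] := triangle_cond v' x y v'xy_triangle dxy.
exists z; split => //; have := gdist_triangle v v' z.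
by move: v'_vx v'_vy; rewrite !inE => /eqP + /eqP; lia.
Qed.

End Meshed.

Theorem mainTheorem1 (T : finType) (e : rel T)
  (e_sym : symmetric e) (e_irr : irreflexive e) (e_conn : gconnected e) :
  meshed e <->
  (forall v x y : T, metric_triangle e v x y -> gdist e x y = 2 ->
     [/\ gdist e v x = 2, gdist e v y = 2 &
         exists z : T, [/\ e x z, e z y & gdist e v z = 2]]).
Proof.
split; first exact: meshed_metric_triangle_condition.
exact: metric_triangle_condition_meshed.
Qed.
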